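(* Assume $z_1,z_2\in D$ are in the same chart. If $f$ satisfies the rate conditions of order $0$ and $z_1\in J_{cu}(z_2,L)$, then $\|\pi_{(\lambda,x)}(f(z_1)-f(z_2))\|\ge\xi_{cu,1,P}\|\pi_{(\lambda,x)}(z_1-z_2)\|$.
   Context: $c,u,s$ positive integers, $\Lambda=(\mathbb{R}/\mathbb{Z})^c$, $R_\Lambda=\tfrac12$; points are ''in the same chart'' if their $\lambda$-components have lifts to $\mathbb{R}^c$ at distance $\le R_\Lambda$; differences, norms, cones and derivatives are computed in such lifts. $\overline B_n(R)$ closed ball at $0$; Euclidean norms. $0<R<R_\Lambda/2$, $D=\Lambda\times\overline B_u(R)\times\overline B_s(R)$, $z=(\lambda,x,y)$, projections $\pi_\lambda,\pi_x,\pi_y,\pi_{(\lambda,x)}$; $f:D\to\Lambda\times\mathbb{R}^u\times\mathbb{R}^s$ is $C^1$, $f=(f_\lambda,f_x,f_y)$. $m(A)=\max\{c:\|Av\|\ge c\|v\|\}$, $m(\mathbf A)=\inf_{A\in\mathbf A}m(A)$; $[\partial g/\partial w(U)]$ = set of matrices with $(i,j)$ entry in $[\inf_U\partial g_i/\partial w_j,\sup_U\partial g_i/\partial w_j]$; $P(z)=\{w\in D:\|\pi_\lambda w-\pi_\lambda z\|\le R_\Lambda/2\}$. Fix $L\in(2R/R_\Lambda,1)$. $\mu_{s,1}=\sup_D\{\|\partial_yf_y\|+\frac1L\|\partial_{(\lambda,x)}f_y\|\}$, $\xi_{u,1,P}=\inf_{z\in D}m[\partial_xf_x(P(z))]-\frac1L\sup_D\|\partial_{(\lambda,y)}f_x\|$,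 $\mu_{cs,1}=\sup_D\{\|\partial_{(\lambda,y)}f_{(\lambda,y)}\|+L\|\partial_xf_{(\lambda,y)}\|\}$, $\xi_{cu,1,P}=\inf_{z\in D}m[\partial_{(\lambda,x)}f_{(\lambda,x)}(P(z))]-L\sup_D\|\partial_yf_{(\lambda,x)}\|$. Rate conditions of order $0$: $\mu_{s,1}<1<\xi_{u,1,P}$, $\mu_{cs,1}<\xi_{u,1,P}$, $\mu_{s,1}<\xi_{cu,1,P}$. $J_{cu}(z,M)=\{(\lambda,x,y):\|y-\pi_yz\|<M\|(\lambda,x)-\pi_{(\lambda,x)}z\|\}\cup\{z\}$. *)

From HB Require Import structures.
From mathcomp Require Import all_boot all_order all_algebra.
From mathcomp Require Import all_classical all_reals all_analysis.
Import numFieldNormedType.Exports.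
Import Order.TTheory GRing.Theory Num.Theory.

Set Implicit Arguments.
Unset Strict Implicit.
Unset Printing Implicit Defensive.

Local Open Scope classical_set_scope.
Local Open Scope ring_scope.

(* A point z = (lambda, x, y) of Lambda x R^u x R^s is represented through a
   lift in R^(c+u+s), as a row vector z : 'rV[R]_(c+u+s).  The map f is represented by a lift
   F : 'rV_(c+u+s) -> 'rV_(c+u+s) (see [lift_periodic]). *)

Section Defs.
Variables (R : realType) (c u s : nat).
Local Notation N := (c + u + s)%N.
Local Notation vec := 'rV[R]_N.
Local Notation mat := ('I_N -> 'I_N -> R).

Definition idxL : pred 'I_N := fun j => (j < c)%N.
Definition idxX : pred 'I_N := fun j => (c <= j < c + u)%N.
Definition idxY : pred 'I_N := fun j => (c + u <= j)%N.
Definition idxLX : pred 'I_N := fun j => (j < c + u)%N.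
Definition idxLY : pred 'I_N := fun j => ~~ idxX j.

Definition RLam : R := 2^-1.

Definition enorm (S : pred 'I_N) (v : vec) : R :=
  Num.sqrt (\sum_(j | S j) v ord0 j ^+ 2).

(* lifted domain D = Lambda x B_u(Rr) x B_s(Rr) *)
Definition Dom (Rr : R) : set vec :=
  [set z | enorm idxX z <= Rr /\ enorm idxY z <= Rr].

(* the map f : D -> Lambda x R^u x R^s, given by its lift F: translating
   lambda by an integer vector changes F only by an integer vector in the
   lambda-component (so F descends to a map on D). *)
Definition lift_periodic (Rr : R) (F : vec -> vec) : Prop :=
  forall z, Dom Rr z ->
  forall k : 'I_N -> int, (forall j, ~~ idxL j -> k j = 0) ->
    let w := z + \row_j (k j)%:~R in
    forall j, (idxL j -> exists m : int, F w ord0 j - F z ord0 j = m%:~R) /\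
              (~~ idxL j -> F w ord0 j = F z ord0 j).

Definition pd (F : vec -> vec) (i j : 'I_N) (z : vec) : R :=
  'D_(delta_mx 0 j) (fun w => F w ord0 i) z.

Definition C1_on (U : set vec) (F : vec -> vec) : Prop :=
  forall i j : 'I_N,
    (forall z, U z -> derivable (fun w => F w ord0 i) z (delta_mx 0 j)) /\
    (forall z, U z -> {for z, continuous (pd F i j)}).

Definition jac (F : vec -> vec) (z : vec) : mat := fun i j => pd F i j z.

Definition bmv (J : pred 'I_N) (A : mat) (v : vec) : vec :=
  \row_i \sum_(j | J j) A i j * v ord0 j.

Definition opn (I J : pred 'I_N) (A : mat) : R :=
  sup [set enorm I (bmv J A v) | v in [set v : vec | enorm J v <= 1]].

Definition mlow (I J : pred 'I_N) (A : mat) : R :=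
  sup [set k : R | forall v : vec, enorm I (bmv J A v) >= k * enorm J v].

Definition mset (I J : pred 'I_N) (AA : set mat) : R :=
  inf [set mlow I J A | A in AA].

Definition imat (I J : pred 'I_N) (F : vec -> vec) (W : set vec) : set mat :=
  [set A | forall i j, I i -> J j ->
     inf (pd F i j @` W) <= A i j <= sup (pd F i j @` W)].

Definition Pset (Rr : R) (z : vec) : set vec :=
  [set w | Dom Rr w /\ enorm idxL (w - z) <= RLam / 2].

Definition mu_s1 (Rr L : R) (F : vec -> vec) : R :=
  sup [set opn idxY idxY (jac F z) + L^-1 * opn idxY idxLX (jac F z)
      | z in Dom Rr].

Definition xi_u1P (Rr L : R) (F : vec -> vec) : R :=
  inf [set mset idxX idxX (imat idxX idxX F (Pset Rr z)) | z in Dom Rr]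
  - L^-1 * sup [set opn idxX idxLY (jac F z) | z in Dom Rr].

Definition mu_cs1 (Rr L : R) (F : vec -> vec) : R :=
  sup [set opn idxLY idxLY (jac F z) + L * opn idxLY idxX (jac F z)
      | z in Dom Rr].

Definition xi_cu1P (Rr L : R) (F : vec -> vec) : R :=
  inf [set mset idxLX idxLX (imat idxLX idxLX F (Pset Rr z)) | z in Dom Rr]
  - L * sup [set opn idxLX idxY (jac F z) | z in Dom Rr].

Definition rate_conditions0 (Rr L : R) (F : vec -> vec) : Prop :=
  [/\ mu_s1 Rr L F < 1, 1 < xi_u1P Rr L F,
      mu_cs1 Rr L F < xi_u1P Rr L F & mu_s1 Rr L F < xi_cu1P Rr L F].

Definition Jcu (z : vec) (M : R) : set vec :=
  [set w | enorm idxY (w - z) < M * enorm idxLX (w - z)] `|` [set z].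

End Defs.

(* Let z3 have the (lambda,x)-coordinates of z1 and the y-coordinate of z2.  From z2 to
   z3 only (lambda,x) moves, and by the chart condition this segment stays in P(c0),
   c0 the midpoint of z1 and z2; the mean value theorem applied row by row yields a
   matrix of the interval matrix [d_(lambda,x) f_(lambda,x) (P(c0))], whence
   ||pi_(lambda,x) (f z3 - f z2)|| >= m * ||pi_(lambda,x) (z1 - z2)||.  From z3 to z1
   only y moves; the mean value theorem for z |-> <v, f z> bounds
   ||pi_(lambda,x) (f z1 - f z3)|| by sup ||d_y f_(lambda,x)|| * ||y1 - y2||, and the
   cone condition z1 \in J_cu(z2, L) turns ||y1 - y2|| into L ||pi_(lambda,x) (z1 - z2)||.
   The suprema and infima in the rates only mean what they say (sup and inf of
   unbounded sets are junk values) because the partial derivatives of f are bounded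
   on D: they are periodic in lambda and continuous on a compact fundamental domain. *)

From Pilot Require Import Defs.
From HB Require Import structures.
From mathcomp Require Import all_boot all_order all_algebra.
From mathcomp Require Import all_classical all_reals all_analysis.
From mathcomp Require Import ring lra.
Import numFieldNormedType.Exports.
Import Order.TTheory GRing.Theory Num.Theory.
Local Open Scope classical_set_scope.
Local Open Scope ring_scope.

Set Implicit Arguments.
Unset Strict Implicit.
Unset Printing Implicit Defensive.

Section CauchySchwarz.
Variables (R : realType) (n : nat) (S : pred 'I_n).
Implicit Types a b : 'I_n -> R.

Lemma sumsq_ge0 a : 0 <= \sum_(j | S j) a j ^+ 2.
Proof. by apply: sumr_ge0 => j _; rewrite sqr_ge0. Qed.

Lemma sumsq_eq0 a : \sum_(j | S j) a j ^+ 2 = 0 -> forall j, S j -> a j = 0.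
Proof.
move=> /eqP; rewrite psumr_eq0 => [/allP a0 j Sj|j _]; last exact: sqr_ge0.
by apply/eqP; rewrite -sqrf_eq0; move: (a0 j (mem_index_enum j)); rewrite Sj.
Qed.

Lemma cauchy_schwarz_sqr a b : (\sum_(j | S j) a j * b j) ^+ 2 <=
  (\sum_(j | S j) a j ^+ 2) * (\sum_(j | S j) b j ^+ 2).
Proof.
set A := \sum_(j | S j) a j ^+ 2; set B := \sum_(j | S j) b j ^+ 2.
set C := \sum_(j | S j) a j * b j.
have quadratic_ge0 t : 0 <= A - 2 * t * C + t ^+ 2 * B.
  have -> : A - 2 * t * C + t ^+ 2 * B = \sum_(j | S j) (a j - t * b j) ^+ 2.
    rewrite /A /B /C mulr_sumr mulr_sumr -sumrN -!big_split /=.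
    by apply: eq_bigr => j _; ring.
  exact: sumsq_ge0.
have [B0|B_neq0] := eqVneq B 0.
  have -> : C = 0 by rewrite /C big1 // => j Sj; rewrite (sumsq_eq0 B0) // mulr0.
  by rewrite B0 expr0n /= mulr0.
have B_gt0 : 0 < B by rewrite lt_def B_neq0 sumsq_ge0.
have := quadratic_ge0 (C / B).
have -> : A - 2 * (C / B) * C + (C / B) ^+ 2 * B = (A * B - C ^+ 2) / B by field.
by rewrite pmulr_lge0 ?invr_gt0 // subr_ge0 mulrC.
Qed.

Lemma cauchy_schwarz a b : \sum_(j | S j) a j * b j <=
  Num.sqrt (\sum_(j | S j) a j ^+ 2) * Num.sqrt (\sum_(j | S j) b j ^+ 2).
Proof.
rewrite -sqrtrM ?sumsq_ge0 //; apply: le_trans (ler_norm _) _.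
by rewrite -sqrtr_sqr ler_wsqrtr // cauchy_schwarz_sqr.
Qed.

End CauchySchwarz.

Section EuclideanNorm.
Variables (R : realType) (c u s : nat).
Local Notation N := (c + u + s)%N.
Local Notation vec := 'rV[R]_N.
Implicit Types (S : pred 'I_N) (v w : vec).

Lemma enorm_ge0 S v : 0 <= enorm S v.
Proof. exact: sqrtr_ge0. Qed.

Lemma eq_enorm S v w : (forall j, S j -> v ord0 j = w ord0 j) ->
  enorm S v = enorm S w.
Proof. by move=> vw; rewrite /enorm; congr Num.sqrt; apply: eq_bigr => j /vw ->. Qed.

Lemma normr_le_enorm S v j : S j -> `|v ord0 j| <= enorm S v.
Proof.
move=> Sj; rewrite /enorm -sqrtr_sqr ler_wsqrtr // (bigD1 j) //= lerDl.
exact: sumsq_ge0.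
Qed.

Lemma enorm_eq0 S v : enorm S v = 0 -> forall j, S j -> v ord0 j = 0.
Proof.
move=> v0 j Sj; apply/normr0_eq0/eqP; rewrite eq_le normr_ge0 andbT.
by rewrite -v0 normr_le_enorm.
Qed.

Lemma enorm_le_sum S v : enorm S v <= \sum_(j | S j) `|v ord0 j|.
Proof.
have sum_ge0 : 0 <= \sum_(j | S j) `|v ord0 j| by apply: sumr_ge0.
rewrite -[leRHS]ger0_norm // /enorm -sqrtr_sqr ler_wsqrtr //.
rewrite [leRHS]expr2 mulr_suml ler_sum // => j Sj.
rewrite -(real_normK (num_real (v ord0 j))) expr2 ler_wpM2l // (bigD1 j) //=.
by rewrite lerDl sumr_ge0.
Qed.

Lemma sum_mul_le_enorm S v w :
  \sum_(j | S j) v ord0 j * w ord0 j <= enorm S v * enorm S w.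
Proof. exact: (cauchy_schwarz S (fun j => v ord0 j) (fun j => w ord0 j)). Qed.

Lemma enormZ S k v : enorm S (k *: v) = `|k| * enorm S v.
Proof.
rewrite /enorm -sqrtr_sqr -sqrtrM ?sqr_ge0 // mulr_sumr.
by congr Num.sqrt; apply: eq_bigr => j _; rewrite mxE exprMn.
Qed.

Lemma enorm0 S : enorm S (0 : vec) = 0.
Proof. by rewrite -(scale0r (0 : vec)) enormZ normr0 mul0r. Qed.

Lemma enormN S v : enorm S (- v) = enorm S v.
Proof. by rewrite -scaleN1r enormZ normrN normr1 mul1r. Qed.

Lemma ler_enormD S v w : enorm S (v + w) <= enorm S v + enorm S w.
Proof.
have [v0 w0] := (enorm_ge0 S v, enorm_ge0 S w).
rewrite -[leRHS]ger0_norm ?addr_ge0 // /enorm -sqrtr_sqr ler_wsqrtr //.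
have -> : \sum_(j | S j) (v + w) ord0 j ^+ 2 =
    \sum_(j | S j) v ord0 j ^+ 2 + 2 * \sum_(j | S j) v ord0 j * w ord0 j
    + \sum_(j | S j) w ord0 j ^+ 2.
  by rewrite mulr_sumr -!big_split /=; apply: eq_bigr => j _; rewrite mxE; ring.
have := sum_mul_le_enorm S v w; rewrite /enorm.
have := sumsq_ge0 S (fun j => v ord0 j); have := sumsq_ge0 S (fun j => w ord0 j).
rewrite sqrrD !sqr_sqrtr ?sumsq_ge0 //; lra.
Qed.

Lemma ler_enorm_distD S v w x : enorm S (w - v) <= enorm S (x - v) + enorm S (x - w).
Proof.
have -> : w - v = (w - x) + (x - v) by rewrite addrA subrK.
by apply: le_trans (ler_enormD _ _ _) _; rewrite -opprB enormN addrC.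
Qed.

Lemma enorm_delta S j : enorm S (delta_mx 0 j : vec) = (S j)%:R.
Proof.
rewrite /enorm; case: (boolP (S j)) => Sj.
  rewrite (bigD1 j) //= big1 ?addr0 ?mxE ?eqxx ?expr1n ?sqrtr1 // => i /andP[_ ij].
  by rewrite mxE (negbTE ij) andbF expr0n.
rewrite big1 ?sqrtr0 // => i Si; rewrite mxE.
have /negbTE -> : i != j by apply: contraNneq Sj => <-.
by rewrite andbF expr0n.
Qed.

Lemma enorm_continuous (S : pred 'I_N) : continuous (enorm S : vec -> R).
Proof.
move=> v; have -> : (enorm S : vec -> R) =
    Num.sqrt \o (\sum_(j | S j) (fun w : vec => w ord0 j ^+ 2)).
  by apply/funext => w; rewrite /enorm /= fct_sumE.
apply: continuous_comp; last exact: sqrt_continuous.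
apply: (big_ind (fun f : vec -> R => {for v, continuous f})) => [|f g fc gc|j _].
- exact: cst_continuous.
- exact: continuousD.
- have -> : (fun w : vec => w ord0 j ^+ 2) =
      (fun w : vec => w ord0 j) \* (fun w : vec => w ord0 j).
    by apply/funext => w; rewrite /= expr2.
  by apply: continuousM; apply: coord_continuous.
Qed.

End EuclideanNorm.

Section OperatorNorms.
Variables (R : realType) (c u s : nat).
Local Notation N := (c + u + s)%N.
Local Notation vec := 'rV[R]_N.
Local Notation mat := ('I_N -> 'I_N -> R).
Implicit Types (I J : pred 'I_N) (v w : vec) (A : mat).

Lemma bmvZ J A k v : bmv J A (k *: v) = k *: bmv J A v.
Proof.
apply/rowP => i; rewrite !mxE mulr_sumr; apply: eq_bigr => j _.
by rewrite mxE mulrCA.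
Qed.

Lemma sum_pred_const_le (P : pred 'I_N) (x : R) : 0 <= x ->
  \sum_(j | P j) x <= N%:R * x.
Proof.
move=> x0; rewrite big_mkcond /=; apply: le_trans (_ : \sum_(j < N) x <= _).
  by apply: ler_sum => j _; case: ifP.
by rewrite sumr_const card_ord mulr_natl.
Qed.

Lemma enorm_bmv_le I J A v M : 0 <= M -> (forall i j, I i -> J j -> `|A i j| <= M) ->
  enorm I (bmv J A v) <= (N * N)%:R * M * enorm J v.
Proof.
move=> M0 A_le; have v0 := enorm_ge0 J v.
have bmv_le i : I i -> `|bmv J A v ord0 i| <= N%:R * (M * enorm J v).
  move=> Ii; rewrite mxE; apply: le_trans (ler_norm_sum _ _ _) _.
  apply: le_trans (sum_pred_const_le J (mulr_ge0 M0 v0)).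
  by apply: ler_sum => j Jj; rewrite normrM ler_pM ?A_le ?normr_le_enorm.
apply: le_trans (enorm_le_sum _ _) _; apply: le_trans (ler_sum _ bmv_le) _.
by rewrite -mulrA natrM -mulrA; apply: sum_pred_const_le; rewrite !mulr_ge0.
Qed.

Lemma mat_entry_bounded A : exists2 M, 0 <= M & forall i j, `|A i j| <= M.
Proof.
exists (\sum_(p : 'I_N * 'I_N) `|A p.1 p.2|) => [|i j]; first exact: sumr_ge0.
by rewrite (bigD1 (i, j)) //= lerDl sumr_ge0.
Qed.

Lemma opn_set_ubound I J A M : 0 <= M -> (forall i j, I i -> J j -> `|A i j| <= M) ->
  ubound [set enorm I (bmv J A v) | v in [set v : vec | enorm J v <= 1]]
    ((N * N)%:R * M).
Proof.
move=> M0 A_le _ [v /= v1 <-]; apply: le_trans (enorm_bmv_le v M0 A_le) _.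
by rewrite ler_piMr // mulr_ge0.
Qed.

Lemma opn_le_bound I J A M : 0 <= M -> (forall i j, I i -> J j -> `|A i j| <= M) ->
  opn I J A <= (N * N)%:R * M.
Proof.
move=> M0 A_le; apply: ge_sup; last exact: opn_set_ubound.
by exists (enorm I (bmv J A 0)), 0; rewrite //= enorm0.
Qed.

Lemma has_ubound_opn I J A :
  has_ubound [set enorm I (bmv J A v) | v in [set v : vec | enorm J v <= 1]].
Proof.
have [M M0 A_le] := mat_entry_bounded A.
by exists ((N * N)%:R * M); apply: (opn_set_ubound M0) => i j _ _.
Qed.

Lemma opn_ge0 I J A : 0 <= opn I J A.
Proof.
apply: le_trans (enorm_ge0 I (bmv J A 0)) (ub_le_sup (has_ubound_opn I J A) _).
by exists 0; rewrite //= enorm0.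
Qed.

Lemma enorm_bmv_le_opn I J A v : enorm I (bmv J A v) <= opn I J A * enorm J v.
Proof.
have [v0|v_neq0] := eqVneq (enorm J v) 0.
  rewrite v0 mulr0 (_ : bmv J A v = 0) ?enorm0 //; apply/rowP => i.
  by rewrite !mxE big1 // => j Jj; rewrite (enorm_eq0 v0) // mulr0.
have v_gt0 : 0 < enorm J v by rewrite lt_def v_neq0 enorm_ge0.
have unit_v : enorm J ((enorm J v)^-1 *: v) <= 1.
  by rewrite enormZ ger0_norm ?invr_ge0 ?enorm_ge0 // mulVf.
have := ub_le_sup (has_ubound_opn I J A) (ex_intro2 _ _ ((enorm J v)^-1 *: v) unit_v erefl).
by rewrite bmvZ enormZ ger0_norm ?invr_ge0 ?enorm_ge0 // -/(opn I J A) ler_pdivrMl // mulrC.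
Qed.

Section LowerNorm.
Variables (I J : pred 'I_N) (j0 : 'I_N).
Hypothesis J_j0 : J j0.

Let lower_set A := [set k : R | forall v : vec, enorm I (bmv J A v) >= k * enorm J v].

Let has_ubound_lower_set A : has_ubound (lower_set A).
Proof.
exists (enorm I (bmv J A (delta_mx 0 j0))) => k /(_ (delta_mx 0 j0)).
by rewrite enorm_delta J_j0 mulr1.
Qed.

Lemma mlow_ge0 A : 0 <= mlow I J A.
Proof.
by apply: (ub_le_sup (has_ubound_lower_set A)) => v; rewrite mul0r enorm_ge0.
Qed.

Lemma mlow_le A v : mlow I J A * enorm J v <= enorm I (bmv J A v).
Proof.
have [v0|v_neq0] := eqVneq (enorm J v) 0; first by rewrite v0 mulr0 enorm_ge0.
have v_gt0 : 0 < enorm J v by rewrite lt_def v_neq0 enorm_ge0.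
rewrite -ler_pdivlMr //; apply: ge_sup; first by exists 0 => w; rewrite mul0r enorm_ge0.
by move=> k /(_ v); rewrite ler_pdivlMr.
Qed.

Lemma mset_ge0 (AA : set mat) : 0 <= Defs.mset I J AA.
Proof.
have [[A AA_A]|AA0] := pselect (AA !=set0).
  by apply: lb_le_inf; [exists (mlow I J A), A | move=> _ [B _ <-]; apply: mlow_ge0].
rewrite (_ : AA = set0) ?/Defs.mset ?image_set0 ?inf0 //.
by apply/seteqP; split => // A ?; apply: AA0; exists A.
Qed.

Lemma mset_le_mlow (AA : set mat) A : AA A -> Defs.mset I J AA <= mlow I J A.
Proof.
move=> AA_A; apply: ge_inf; last by exists A.
by exists 0 => _ [B _ <-]; apply: mlow_ge0.
Qed.

End LowerNorm.

End OperatorNorms.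

Section RealMeanValue.
Variable R : realType.
Implicit Types (f df : R -> R) (a b : R).

Lemma MVT_closed f df a b : a <= b ->
  (forall t, a <= t <= b -> is_derive t 1 f (df t)) ->
  exists2 th, a <= th <= b & f b - f a = df th * (b - a).
Proof.
move=> ab fd.
have fd_oo t : t \in `]a, b[ -> is_derive t 1 f (df t).
  by rewrite in_itv /= => /andP[? ?]; apply: fd; rewrite !ltW.
have f_cont : {within `[a, b], continuous f}.
  apply: derivable_within_continuous => t; rewrite in_itv /= => /fd fd_t.
  exact: (@ex_derive _ _ _ _ _ _ _ fd_t).
have [th th_ab eq] := MVT_segment ab fd_oo f_cont.
by exists th => //; move: th_ab; rewrite in_itv.
Qed.

Lemma MVT_abs f df a : (forall t : R, `|t| <= `|a| -> is_derive t 1 f (df t)) ->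
  exists2 th, `|th| <= `|a| & f a - f 0 = df th * a.
Proof.
move=> fd; have [a0|a_lt0] := leP 0 a.
  have fd0 t : 0 <= t <= a -> is_derive t 1 f (df t).
    by move=> /andP[t0 ta]; apply: fd; rewrite !ger0_norm // (le_trans t0).
  have [th /andP[th0 tha] ->] := MVT_closed a0 fd0.
  by exists th; rewrite ?subr0 // !ger0_norm // (le_trans th0).
have fd0 t : a <= t <= 0 -> is_derive t 1 f (df t).
  move=> /andP[a_t t0]; apply: fd.
  by rewrite !ler0_norm ?lerN2 // ?ltW // (le_trans a_t).
have [th /andP[ath th0] eq] := MVT_closed (ltW a_lt0) fd0.
exists th; first by rewrite !ler0_norm ?lerN2 // ?ltW // (le_trans ath).
by move: eq; rewrite sub0r; lra.
Qed.

End RealMeanValue.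

Section PartialDerivatives.
Variables (R : realType) (n : nat).
Local Notation vec := 'rV[R]_n.
Implicit Types (G : vec -> R) (p x y d e : vec).

Lemma is_derive_line G p e t : derivable G (p + t *: e) e ->
  is_derive t 1 (fun t => G (p + t *: e)) ('D_e G (p + t *: e)).
Proof.
move=> G_der.
have quotE : (fun h : R => h^-1 *: (((fun t => G (p + t *: e)) \o shift t) (h *: 1)
      - G (p + t *: e))) =
    (fun h : R => h^-1 *: ((G \o shift (p + t *: e)) (h *: e) - G (p + t *: e))).
  by apply/funext => h /=; rewrite /shift /= scaler1 scalerDl addrCA.
by split; [rewrite /derivable quotE | rewrite /derive quotE].
Qed.

Lemma line_mvt G p e a : (forall t, `|t| <= `|a| -> derivable G (p + t *: e) e) ->
  exists2 th, `|th| <= `|a| & G (p + a *: e) - G p = 'D_e G (p + th *: e) * a.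
Proof.
move=> G_der; have [th tha eq] := @MVT_abs R (fun t => G (p + t *: e)) _ a
  (fun t ta => is_derive_line (G_der t ta)).
by exists th => //; rewrite -eq scale0r addr0.
Qed.

Definition stair (d : vec) (k : nat) : vec :=
  \row_j (if (j < k)%N then d ord0 j else 0).

Lemma stair0 d : stair d 0 = 0.
Proof. by apply/rowP => j; rewrite !mxE. Qed.

Lemma stair_full d : stair d n = d.
Proof. by apply/rowP => j; rewrite !mxE ltn_ord. Qed.

Lemma stairS d (k : 'I_n) : stair d k.+1 = stair d k + d ord0 k *: delta_mx 0 k.
Proof.
apply/rowP => j; rewrite !mxE ltnS leq_eqVlt.
have [->|jk] := eqVneq j k; first by rewrite eqxx ltnn /= add0r mulr1.
by rewrite (inj_eq val_inj) (negbTE jk) /= mulr0 addr0.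
Qed.

Lemma ball_coord x y r : 0 < r -> (forall j, `|x ord0 j - y ord0 j| < r) -> ball x r y.
Proof. by move=> r0 xy; split => // i j; rewrite (ord1 i); apply: xy. Qed.

Lemma ball_stair x d h r (k : 'I_n) t : `|h| * \sum_j `|d ord0 j| < r ->
  `|t| <= `|h * d ord0 k| -> ball x r (x + h *: stair d k + t *: delta_mx 0 k).
Proof.
move=> hd_lt t_le; have r0 : 0 < r by apply: le_lt_trans hd_lt; rewrite mulr_ge0 ?sumr_ge0.
apply: ball_coord => // j; rewrite !mxE eqxx /= -addrA opprD addrA subrr sub0r normrN.
apply: le_lt_trans hd_lt; rewrite (bigD1 j) //= mulrDr.
apply: le_trans (_ : `|h| * `|d ord0 j| <= _); last by rewrite lerDl mulr_ge0 ?sumr_ge0.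
case: (ltnP j k) => jk.
  have /negbTE -> : j != k by rewrite -(inj_eq val_inj) /= ltn_eqF.
  by rewrite mulr0 addr0 normrM.
rewrite mulr0 add0r; have [->|_] := eqVneq j k; first by rewrite mulr1 -normrM.
by rewrite mulr0 normr0 mulr_ge0.
Qed.

Lemma staircase_mvt G x d h r :
  (forall y j, ball x r y -> derivable G y (delta_mx 0 j)) ->
  `|h| * \sum_j `|d ord0 j| < r ->
  exists th : 'I_n -> R,
    (forall k : 'I_n, ball x r (x + h *: stair d k + th k *: delta_mx 0 k)) /\
    G (x + h *: d) - G x = \sum_(k < n)
      'D_(delta_mx 0 k) G (x + h *: stair d k + th k *: delta_mx 0 k) * (h * d ord0 k).
Proof.
move=> G_der hd_lt.
have step (k : 'I_n) : exists th, `|th| <= `|h * d ord0 k| /\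
    G (x + h *: stair d k.+1) - G (x + h *: stair d k) =
    'D_(delta_mx 0 k) G (x + h *: stair d k + th *: delta_mx 0 k) * (h * d ord0 k).
  rewrite stairS scalerDr scalerA addrA.
  have [th th_le eq] := line_mvt (fun t t_le => G_der _ k (ball_stair x hd_lt t_le)).
  by exists th.
have [th th_spec] := choice step.
exists th; split => [k|]; first exact: ball_stair hd_lt (th_spec k).1.
have telescope : \sum_(k < n) (G (x + h *: stair d k.+1) - G (x + h *: stair d k))
    = G (x + h *: d) - G x.
  rewrite -(big_mkord xpredT (fun k => G (x + h *: stair d k.+1) - G (x + h *: stair d k))).
  by rewrite telescope_sumr // stair_full stair0 scaler0 addr0.
by rewrite -telescope; apply: eq_bigr => k _; exact: (th_spec k).2.
Qed.

Section ContinuousPartials.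
Variables (G : vec -> R) (U : set vec).
Hypotheses (U_open : open U)
  (G_der : forall y j, U y -> derivable G y (delta_mx 0 j)).

Lemma partials_cvg_dir x d : U x ->
  (forall j, {for x, continuous (fun y => 'D_(delta_mx 0 j) G y)}) ->
  (fun h : R => h^-1 *: ((G \o shift x) (h *: d) - G x)) @ (0 : R)^' -->
    \sum_(j < n) d ord0 j * 'D_(delta_mx 0 j) G x.
Proof.
move=> Ux G_cont; set Sd := \sum_j `|d ord0 j|.
have Sd1 : 0 < Sd + 1 by rewrite ltr_wpDl ?sumr_ge0.
apply/cvgrPdist_lt => e e0; have eSd : 0 < e / (Sd + 1) by rewrite divr_gt0.
have : \forall y \near x, U y /\ forall j : 'I_n,
    `|'D_(delta_mx 0 j) G x - 'D_(delta_mx 0 j) G y| < e / (Sd + 1).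
  near=> y; split; first by near: y; move: U_open; rewrite openE => /(_ x Ux).
  near: y; apply: filter_forall => j; exact: (cvgrPdist_lt _ _).1 (G_cont j) _ eSd.
move=> /nbhs_ballP [r r0 near_x].
near=> h.
have h_neq0 : h != 0 by near: h; exact: nbhs_dnbhs_neq.
have hSd : `|h| * Sd < r.
  have : `|h| < r / (Sd + 1) by near: h; apply: dnbhs0_lt; rewrite divr_gt0.
  rewrite ltr_pdivlMr // => /(le_lt_trans _); apply; rewrite ler_wpM2l ?lerDl //.
have [th [th_ball incrG]] :=
  staircase_mvt (fun y j xy => @G_der y j (near_x y xy).1) hSd.
rewrite /= [h *: d + x]addrC incrG scaler_sumr -sumrB.
apply: le_lt_trans (ler_norm_sum _ _ _) _.
apply: (@le_lt_trans _ _ (\sum_(k < n) `|d ord0 k| * (e / (Sd + 1)))).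
  apply: ler_sum => k _; set Dk := 'D_(delta_mx 0 k) G _.
  have quotE (a b : R) : h^-1 * (a * (h * b)) = b * a by field.
  rewrite -[_ *: _]/(h^-1 * _) quotE.
  rewrite -mulrBr normrM.
  by rewrite ler_wpM2l // ltW // (near_x _ (th_ball k)).2.
rewrite -mulr_suml -/Sd mulrA ltr_pdivrMr // mulrDr mulr1 mulrC ltrDl //.
Unshelve. all: by end_near.
Qed.

Lemma dir_derive_partials x d : U x ->
  (forall j, {for x, continuous (fun y => 'D_(delta_mx 0 j) G y)}) ->
  derivable G x d /\ 'D_d G x = \sum_(j < n) d ord0 j * 'D_(delta_mx 0 j) G x.
Proof.
move=> Ux G_cont; have cvg_quot := partials_cvg_dir (d := d) Ux G_cont.
by split; [apply/cvg_ex; eexists; exact: cvg_quot | exact: cvg_lim].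
Qed.

End ContinuousPartials.

End PartialDerivatives.

Section SegmentMeanValue.
Variables (R : realType) (c u s : nat).
Local Notation N := (c + u + s)%N.
Local Notation vec := 'rV[R]_N.
Variables (F : vec -> vec) (U : set vec).
Hypotheses (U_open : open U) (F_C1 : C1_on U F).

Lemma segment_mvt (w : 'I_N -> R) z d : (forall t, 0 <= t <= 1 -> U (z + t *: d)) ->
  exists2 t, 0 <= t <= 1 &
    \sum_(i < N) w i * (F (z + d) ord0 i - F z ord0 i) =
    \sum_(i < N) w i * \sum_(j < N) d ord0 j * pd F i j (z + t *: d).
Proof.
move=> seg_U.
pose phi t := \sum_(i < N) w i * F (z + t *: d) ord0 i.
pose dphi t := \sum_(i < N) w i * \sum_(j < N) d ord0 j * pd F i j (z + t *: d).
have phi_der (t : R) : 0 <= t <= 1 -> is_derive t 1 phi (dphi t).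
  move=> t01; rewrite /phi /dphi.
  have -> : (fun t => \sum_(i < N) w i * F (z + t *: d) ord0 i) =
      \sum_(i < N) (w i \*: (fun t : R => F (z + t *: d) ord0 i)).
    by apply/funext => t'; rewrite fct_sumE.
  apply: is_derive_sum => i; apply: is_deriveZ.
  have [F_der F_dir] := dir_derive_partials (G := fun y => F y ord0 i) U_open
    (fun y j Uy => (F_C1 i j).1 y Uy) d (seg_U t t01) (fun j => (F_C1 i j).2 _ (seg_U t t01)).
  by have := is_derive_line F_der; rewrite F_dir.
have [t t01 eq] := MVT_closed ler01 phi_der.
by exists t => //; move: eq; rewrite /phi /dphi subr0 mulr1 scale1r scale0r addr0 -sumrB;
  under eq_bigr do rewrite -mulrBr.
Qed.

Lemma sum_delta (i0 : 'I_N) (f : 'I_N -> R) : \sum_(i < N) (i == i0)%:R * f i = f i0.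
Proof.
by rewrite (bigD1 i0) //= eqxx mul1r big1 ?addr0 // => i /negbTE ->; rewrite mul0r.
Qed.

Lemma coord_mvt i z d : (forall t, 0 <= t <= 1 -> U (z + t *: d)) ->
  exists2 t, 0 <= t <= 1 &
    F (z + d) ord0 i - F z ord0 i = \sum_(j < N) d ord0 j * pd F i j (z + t *: d).
Proof.
move=> seg_U; have [t t01] := segment_mvt (fun i' => (i' == i)%:R) seg_U.
by rewrite !sum_delta; exists t.
Qed.

End SegmentMeanValue.

Section Limits.
Variable R : realType.

Lemma int_norm_lt1 (m : int) : `|(m%:~R : R)| < 1 -> m = 0.
Proof.
move=> m_lt1; have : (`|m| < 1)%R by rewrite -(ltr_int R) intr_norm.
by case: m {m_lt1} => [[|n]|n].
Qed.

Lemma cvg_eq_of_int_diff (f g : R -> R) (a b : R) :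
  f @ (0 : R)^' --> a -> g @ (0 : R)^' --> b ->
  (\forall h \near (0 : R)^', exists m : int, h * (f h - g h) = m%:~R) -> a = b.
Proof.
move=> fa gb fg_int; set B := `|a| + `|b| + 2.
have B_gt0 : 0 < B by rewrite ltr_wpDl ?addr_ge0.
have f_eq_g : \forall h \near (0 : R)^', g h = f h.
  near=> h.
  have h_neq0 : h != 0 by near: h; exact: nbhs_dnbhs_neq.
  have h_lt : `|h| < B^-1 by near: h; apply: dnbhs0_lt; rewrite invr_gt0.
  have fa1 : `|a - f h| < 1 by near: h; exact: (cvgrPdist_lt _ _).1 fa 1 ltr01.
  have gb1 : `|b - g h| < 1 by near: h; exact: (cvgrPdist_lt _ _).1 gb 1 ltr01.
  have [m hm] : exists m : int, h * (f h - g h) = m%:~R by near: h.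
  have fg_lt : `|f h - g h| < B.
    have -> : f h - g h = (a - b) - (a - f h) + (b - g h) by ring.
    apply: le_lt_trans (ler_normD _ _) _; rewrite /B.
    have := ler_normB (a - b) (a - f h); have := ler_normB a b; lra.
  have m0 : m = 0.
    apply: int_norm_lt1; rewrite -hm normrM (lt_le_trans (y := B^-1 * B)) //.
      by rewrite ltr_pM.
    by rewrite mulVf ?gt_eqF.
  by move: hm; rewrite m0 => /eqP; rewrite mulf_eq0 (negbTE h_neq0) subr_eq0 eq_sym => /eqP.
have f_to_b : f @ (0 : R)^' --> b by apply: cvg_trans gb; apply: near_eq_cvg.
exact: cvg_unique fa f_to_b.
Unshelve. all: by end_near.
Qed.

End Limits.

Section Approximation.
Variables (R : realType) (n : nat).

Lemma normr_le_of_approx (g : 'rV[R]_n -> R) (z : 'rV[R]_n) (M : R) :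
  {for z, continuous g} ->
  (forall e, 0 < e -> exists2 w, ball z e w & `|g w| <= M) -> `|g z| <= M.
Proof.
move=> g_cont approx; rewrite leNgt; apply/negP => M_lt.
have gap : 0 < `|g z| - M by rewrite subr_gt0.
have := (cvgrPdist_lt (F := nbhs z) (FF := nbhs_filter z) g (g z)).1 g_cont _ gap.
move=> /nbhs_ballP [r r0 near_z].
have [w zw gw_le] := approx r r0; have /= := near_z w zw.
by have := ler_normD (g w) (g z - g w); rewrite addrC subrK; lra.
Qed.

End Approximation.

Section Periodicity.
Variables (R : realType) (c u s : nat).
Local Notation N := (c + u + s)%N.
Local Notation vec := 'rV[R]_N.
Local Notation idxL := (@idxL c u s).
Local Notation idxX := (@idxX c u s).
Local Notation idxY := (@idxY c u s).

Definition lattice_vec (k : 'I_N -> int) : vec := \row_j (k j)%:~R.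

Definition lambda_lattice (k : 'I_N -> int) := forall j, ~~ idxL j -> k j = 0.

Lemma idxX_notL j : idxX j -> ~~ idxL j.
Proof. by rewrite /idxX /idxL -leqNgt => /andP[]. Qed.

Lemma idxY_notL j : idxY j -> ~~ idxL j.
Proof. by rewrite /idxY /idxL -leqNgt; apply: leq_trans (leq_addr _ _). Qed.

Lemma enorm_add_lattice (S : pred 'I_N) z k : lambda_lattice k ->
  (forall j, S j -> ~~ idxL j) -> enorm S (z + lattice_vec k) = enorm S z.
Proof.
by move=> k_lat S_notL; apply: eq_enorm => j /S_notL/k_lat kj; rewrite !mxE kj addr0.
Qed.

Variables (Rr : R) (F : vec -> vec) (U : set vec).
Hypotheses (Rr_gt0 : 0 < Rr) (Dom_U : Dom Rr `<=` U) (F_C1 : C1_on U F)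
  (F_per : lift_periodic Rr F).

Lemma Dom_add_lattice z k : lambda_lattice k -> Dom Rr z -> Dom Rr (z + lattice_vec k).
Proof.
move=> k_lat [zX zY].
by split; rewrite enorm_add_lattice //; [apply: idxX_notL | apply: idxY_notL].
Qed.

Lemma Dom_coord z j : Dom Rr z -> ~~ idxL j -> `|z ord0 j| <= Rr.
Proof.
move=> [zX zY]; rewrite /idxL -leqNgt => cj; case: (ltnP j (c + u)) => j_cu.
  by apply: le_trans zX; apply: normr_le_enorm; rewrite /idxX cj.
by apply: le_trans zY; apply: normr_le_enorm.
Qed.

Lemma increment_periodic k z w i : lambda_lattice k -> Dom Rr z -> Dom Rr w ->
  exists m : int, (F (w + lattice_vec k) ord0 i - F w ord0 i)
                  - (F (z + lattice_vec k) ord0 i - F z ord0 i) = m%:~R.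
Proof.
move=> k_lat Dz Dw.
have /= [wL wnL] := F_per Dw k_lat i; have /= [zL znL] := F_per Dz k_lat i.
case: (boolP (idxL i)) => [Li|nLi]; last by exists 0; rewrite wnL ?znL // !subrr.
have [[m1 ->] [m2 ->]] := (wL Li, zL Li).
by exists (m1 - m2); rewrite intrB.
Qed.

Lemma pd_periodic_interior k z i j : lambda_lattice k ->
  enorm idxX z < Rr -> enorm idxY z < Rr -> pd F i j (z + lattice_vec k) = pd F i j z.
Proof.
move=> k_lat zX zY; have Dz : Dom Rr z by split; apply: ltW.
have Dzk := Dom_add_lattice k_lat Dz.
apply: cvg_eq_of_int_diff ((F_C1 i j).1 _ (Dom_U Dzk)) ((F_C1 i j).1 _ (Dom_U Dz)) _.
have rho_gt0 : 0 < Num.min (Rr - enorm idxX z) (Rr - enorm idxY z).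
  by rewrite lt_min !subr_gt0 zX zY.
near=> h.
have h_neq0 : h != 0 by near: h; exact: nbhs_dnbhs_neq.
have h_lt : `|h| < Num.min (Rr - enorm idxX z) (Rr - enorm idxY z).
  by near: h; exact: dnbhs0_lt.
have Dw : Dom Rr (h *: delta_mx 0 j + z).
  have enorm_le S : enorm S (h *: delta_mx 0 j + z) <= `|h| + enorm S z.
    apply: le_trans (ler_enormD _ _ _) _; rewrite enormZ enorm_delta lerD2r.
    by rewrite ler_piMr //; case: (S j).
  move: h_lt; rewrite lt_min => /andP[rX rY].
  by split; apply: le_trans (enorm_le _) _; lra.
have [m incr] := increment_periodic i k_lat Dz Dw.
have quotE (a b a' b' : R) :
    h * (h^-1 *: (a - b) - h^-1 *: (a' - b')) = (a - a') - (b - b').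
  by rewrite -2![h^-1 *: _]/(h^-1 * _); field.
by exists m; rewrite -incr /= /shift /= quotE addrA.
Unshelve. all: by end_near.
Qed.

Lemma Dom_closed : closed (Dom Rr : set vec).
Proof.
have -> : (Dom Rr : set vec) = enorm idxX @^-1` [set x | x <= Rr] `&`
                               enorm idxY @^-1` [set x | x <= Rr].
  by apply/seteqP; split.
by apply: closedI; apply: preimage_closed; try exact: closed_le;
  move=> z _; apply: enorm_continuous.
Qed.

Definition fundamental_box (i : 'I_N) : set R :=
  if idxL i then `[0, 1]%classic else `[- Rr, Rr]%classic.

Definition fundamental_domain : set vec :=
  [set v : vec | forall i, fundamental_box i (v ord0 i)] `&` Dom Rr.

Lemma pd_bounded_fundamental i j :
  exists M, forall z, fundamental_domain z -> `|pd F i j z| <= M.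
Proof.
have fd_compact : compact fundamental_domain.
  apply: compact_closedI; last exact: Dom_closed.
  by apply: rV_compact => i'; rewrite /fundamental_box; case: ifP => _;
    exact: segment_compact.
have pd_cont : {within fundamental_domain, continuous (pd F i j)}.
  by apply: continuous_in_subspaceT => z; rewrite inE => -[_ /Dom_U/(F_C1 i j).2].
have [M [_ M_bound]] := compact_bounded (continuous_compact pd_cont fd_compact).
by exists (M + 1) => z fd_z; apply: (M_bound (M + 1)); [rewrite ltrDl | exists z].
Qed.

Lemma pd_bounded_interior i j : exists M, forall z,
  enorm idxX z < Rr -> enorm idxY z < Rr -> `|pd F i j z| <= M.
Proof.
have [M M_bound] := pd_bounded_fundamental i j; exists M => z zX zY.
pose k j' := if idxL j' then Num.floor (z ord0 j') else 0.
have k_lat : lambda_lattice k by move=> j' /negbTE; rewrite /k => ->.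
have nk_lat : lambda_lattice (fun j' => - k j') by move=> j' /k_lat ->.
pose z0 := z + lattice_vec (fun j' => - k j').
have z0X : enorm idxX z0 < Rr by rewrite enorm_add_lattice //; apply: idxX_notL.
have z0Y : enorm idxY z0 < Rr by rewrite enorm_add_lattice //; apply: idxY_notL.
have -> : z = z0 + lattice_vec k.
  by apply/rowP => j'; rewrite !mxE intrN -addrA addNr addr0.
rewrite pd_periodic_interior //; apply: M_bound; split; last by split; apply: ltW.
move=> j'; rewrite /fundamental_box /z0 /k !mxE; case: ifP => Lj.
  have := real_floor_le (num_real (z ord0 j')).
  have := real_floorD1_gt (num_real (z ord0 j')).
  by rewrite /= in_itv /= intrN intrD; lra.
rewrite /= in_itv /= oppr0 addr0 -ler_norml.
by apply: Dom_coord; [split; apply: ltW | rewrite Lj].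
Qed.

Definition shrink (r : R) (z : vec) : vec :=
  \row_j (if idxL j then z ord0 j else r * z ord0 j).

Lemma enorm_shrink (S : pred 'I_N) r z : (forall j, S j -> ~~ idxL j) ->
  enorm S (shrink r z) = `|r| * enorm S z.
Proof.
by move=> S_notL; rewrite -enormZ; apply: eq_enorm => j /S_notL/negbTE Lj; rewrite !mxE Lj.
Qed.

Lemma shrink_approx z (e : R) : Dom Rr z -> 0 < e ->
  exists2 r, 0 <= r < 1 & ball z e (shrink r z).
Proof.
move=> Dz e0; have Rr1 : 0 < Rr + 1 by rewrite ltr_wpDl ?ltW.
pose eta := Num.min (e / (Rr + 1)) 1.
have eta_gt0 : 0 < eta by rewrite lt_min ltr01 andbT divr_gt0.
have eta_Rr : eta * Rr < e.
  apply: le_lt_trans (_ : e / (Rr + 1) * Rr < e).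
    by apply: ler_wpM2r; [exact: ltW | rewrite /eta ge_min lexx].
  by rewrite mulrAC ltr_pdivrMr // ltr_pM2l // ltrDl.
exists (1 - eta); first by rewrite subr_ge0 /eta ge_min lexx orbT gtrBl eta_gt0.
apply: ball_coord => // j; rewrite !mxE; case: ifP => Lj; first by rewrite subrr normr0.
rewrite (_ : _ - _ = eta * z ord0 j); last by ring.
rewrite normrM gtr0_norm //; apply: le_lt_trans eta_Rr.
by apply: ler_wpM2l; [exact: ltW | apply: Dom_coord Dz _; rewrite Lj].
Qed.

(* Periodicity of the derivatives is only available at interior points of D; boundary
   points are reached as limits of [shrink r z]. *)
Lemma pd_bounded : exists2 M, 0 <= M & forall i j z, Dom Rr z -> `|pd F i j z| <= M.
Proof.
have pd_bound (p : 'I_N * 'I_N) : exists M, forall z, Dom Rr z -> `|pd F p.1 p.2 z| <= M.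
  have [M M_bound] := pd_bounded_interior p.1 p.2; exists M => z Dz.
  apply: normr_le_of_approx ((F_C1 p.1 p.2).2 _ (Dom_U Dz)) _ => e e0.
  have [r /andP[r0 r1] zr] := shrink_approx Dz e0; exists (shrink r z) => //.
  have shrink_lt (S : pred 'I_N) : enorm S z <= Rr -> (forall j, S j -> ~~ idxL j) ->
      enorm S (shrink r z) < Rr.
    move=> zS S_notL; rewrite enorm_shrink // ger0_norm //.
    by apply: le_lt_trans (_ : r * Rr < Rr); [exact: ler_wpM2l | rewrite gtr_pMl].
  by apply: M_bound; [apply: shrink_lt Dz.1 idxX_notL | apply: shrink_lt Dz.2 idxY_notL].
have [M M_bound] := choice pd_bound.
exists (\sum_p `|M p|) => [|i j z Dz]; first exact: sumr_ge0.
apply: le_trans (M_bound (i, j) z Dz) _; apply: le_trans (ler_norm _) _.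
by rewrite (bigD1 (i, j)) //= lerDl sumr_ge0.
Qed.

End Periodicity.

Section BlockMeanValue.
Variables (R : realType) (c u s : nat).
Local Notation N := (c + u + s)%N.
Local Notation vec := 'rV[R]_N.
Variables (F : vec -> vec) (U W : set vec) (M : R) (I J : pred 'I_N).
Hypotheses (U_open : open U) (F_C1 : C1_on U F) (W_U : W `<=` U)
  (pd_W : forall i j w, W w -> `|pd F i j w| <= M).

Lemma opn_le_sup w : W w -> opn I J (jac F w) <= sup [set opn I J (jac F w) | w in W].
Proof.
move=> Ww; apply: ub_le_sup; last by exists w.
exists ((N * N)%:R * `|M|) => _ [w' Ww' <-]; apply: opn_le_bound => // i j _ _.
exact: le_trans (pd_W _ _ Ww') (ler_norm M).
Qed.

Variables (z d : vec).
Hypotheses (d_J : forall j, ~~ J j -> d ord0 j = 0)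
  (seg_W : forall t : R, 0 <= t <= 1 -> W (z + t *: d)).

Let seg_U (t : R) (t01 : 0 <= t <= 1) : U (z + t *: d) := W_U (seg_W t01).

Lemma mset_le_mean_value j0 : J j0 ->
  Defs.mset I J (imat I J F W) * enorm J d <= enorm I (F (z + d) - F z).
Proof.
move=> J_j0.
have mvt i : exists t, 0 <= t <= 1 /\
    F (z + d) ord0 i - F z ord0 i = \sum_(j < N) d ord0 j * pd F i j (z + t *: d).
  by have [t t01 eq] := coord_mvt U_open F_C1 i seg_U; exists t.
(* One intermediate point per row; each entry of [A] then lies between the inf and the sup
   of that partial derivative over [W]. *)
have [t t_spec] := choice mvt.
pose A i j := pd F i j (z + t i *: d).
have A_imat : imat I J F W A.
  move=> i j _ _; have W_ti := seg_W (t_spec i).1.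
  apply/andP; split; [apply: ge_inf | apply: ub_le_sup]; try by exists (z + t i *: d).
    by exists (- M) => _ [w Ww <-]; move: (pd_W i j Ww); rewrite ler_norml => /andP[].
  by exists M => _ [w Ww <-]; move: (pd_W i j Ww); rewrite ler_norml => /andP[].
have := mset_le_mlow I J_j0 A_imat; move=> /(ler_wpM2r (enorm_ge0 J d)) /le_trans; apply.
have -> : enorm I (F (z + d) - F z) = enorm I (bmv J A d).
  apply: eq_enorm => i _; rewrite !mxE (t_spec i).2 [RHS]big_mkcond /=.
  by apply: eq_bigr => j _; case: ifP => [_|/negbT/d_J ->]; [rewrite mulrC | rewrite mul0r].
exact: mlow_le.
Qed.

Lemma enorm_le_opn_mean_value :
  enorm I (F (z + d) - F z) <= sup [set opn I J (jac F w) | w in W] * enorm J d.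
Proof.
(* Testing the mean value theorem against [w = pi_I dF] gives
   ||pi_I dF||^2 = <pi_I dF, D F(xi) d> for a single intermediate point [xi]. *)
set S := sup _; pose dF := F (z + d) - F z; pose w i := if I i then dF ord0 i else 0.
have [t t01 mvt] := segment_mvt U_open F_C1 w seg_U.
pose xi := z + t *: d.
have opn_le_S : opn I J (jac F xi) <= S := opn_le_sup (seg_W t01).
have S0 : 0 <= S := le_trans (opn_ge0 _ _ _) opn_le_S.
have lhsE : \sum_(i < N) w i * (F (z + d) ord0 i - F z ord0 i) = enorm I dF ^+ 2.
  rewrite sqr_sqrtr ?sumsq_ge0 // [RHS]big_mkcond; apply: eq_bigr => i _.
  by rewrite /w; case: ifP => _; [rewrite /dF !mxE expr2 | rewrite mul0r].
have rhsE : \sum_(i < N) w i * \sum_(j < N) d ord0 j * pd F i j xi =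
    \sum_(i | I i) dF ord0 i * bmv J (jac F xi) d ord0 i.
  rewrite [RHS]big_mkcond; apply: eq_bigr => i _; rewrite /w.
  case: ifP => _; last by rewrite mul0r.
  congr (_ * _); rewrite mxE [RHS]big_mkcond; apply: eq_bigr => j _.
  by case: ifP => [_|/negbT/d_J ->]; [rewrite mulrC | rewrite mul0r].
have dF_sqr_le : enorm I dF ^+ 2 <= enorm I dF * (S * enorm J d).
  rewrite -lhsE mvt rhsE; apply: le_trans (sum_mul_le_enorm _ _ _) _.
  apply: ler_pM; rewrite ?enorm_ge0 //; apply: le_trans (enorm_bmv_le_opn _ _ _ _) _.
  by apply: ler_pM; rewrite ?opn_ge0 ?enorm_ge0.
have [dF0|dF_neq0] := eqVneq (enorm I dF) 0; first by rewrite dF0 mulr_ge0 ?enorm_ge0.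
by move: dF_sqr_le; rewrite expr2 ler_pM2l // lt_def dF_neq0 enorm_ge0.
Qed.

End BlockMeanValue.

Section Splice.
Variables (R : realType) (c u s : nat).
Local Notation N := (c + u + s)%N.
Local Notation vec := 'rV[R]_N.
Local Notation idxL := (@idxL c u s).
Local Notation idxX := (@idxX c u s).
Local Notation idxY := (@idxY c u s).
Local Notation idxLX := (@idxLX c u s).
Implicit Types (v w : vec) (S T : pred 'I_N).

Definition splice (T : pred 'I_N) (v w : vec) : vec :=
  \row_j (if T j then v ord0 j else w ord0 j).

Lemma enorm_splice_in (S T : pred 'I_N) v w : (forall j, S j -> T j) ->
  enorm S (splice T v w) = enorm S v.
Proof. by move=> ST; apply: eq_enorm => j /ST Tj; rewrite mxE Tj. Qed.

Lemma enorm_splice_out (S T : pred 'I_N) v w : (forall j, S j -> ~~ T j) ->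
  enorm S (splice T v w) = enorm S w.
Proof. by move=> ST; apply: eq_enorm => j /ST/negbTE Tj; rewrite mxE Tj. Qed.

Lemma splice_segment_left T v w (t : R) :
  w + t *: (splice T v w - w) = splice T (w + t *: (v - w)) w.
Proof. by apply/rowP => j; rewrite !mxE; case: ifP => _; ring. Qed.

Lemma splice_segment_right T v w (t : R) :
  splice T v w + t *: (v - splice T v w) = splice T v (w + t *: (v - w)).
Proof. by apply/rowP => j; rewrite !mxE; case: ifP => _; ring. Qed.

Lemma splice_subr_out T v w j : ~~ T j -> (splice T v w - w) ord0 j = 0.
Proof. by move=> /negbTE Tj; rewrite !mxE Tj subrr. Qed.

Lemma subr_splice_in T v w j : T j -> (v - splice T v w) ord0 j = 0.
Proof. by move=> Tj; rewrite !mxE Tj subrr. Qed.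

Lemma enorm_splice_subr (S T : pred 'I_N) v w : (forall j, S j -> T j) ->
  enorm S (splice T v w - w) = enorm S (v - w).
Proof. by move=> ST; apply: eq_enorm => j /ST Tj; rewrite !mxE Tj. Qed.

Lemma enorm_subr_splice (S T : pred 'I_N) v w : (forall j, S j -> ~~ T j) ->
  enorm S (v - splice T v w) = enorm S (v - w).
Proof. by move=> ST; apply: eq_enorm => j /ST/negbTE Tj; rewrite !mxE Tj. Qed.

Lemma idxX_LX j : idxX j -> idxLX j.
Proof. by rewrite /idxX /idxLX => /andP[]. Qed.

Lemma idxL_LX j : idxL j -> idxLX j.
Proof. by rewrite /idxL /idxLX => /leq_trans; apply; rewrite leq_addr. Qed.

Lemma idxY_notLX j : idxY j -> ~~ idxLX j.
Proof. by rewrite /idxY /idxLX -leqNgt. Qed.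

Lemma notLX_idxY j : ~~ idxLX j -> idxY j.
Proof. by rewrite /idxY /idxLX -leqNgt. Qed.

Lemma enorm_convex (S : pred 'I_N) (Rr t : R) v w : 0 <= t <= 1 ->
  enorm S v <= Rr -> enorm S w <= Rr -> enorm S (w + t *: (v - w)) <= Rr.
Proof.
move=> /andP[t0 t1] vR wR.
have -> : w + t *: (v - w) = t *: v + (1 - t) *: w by apply/rowP => j; rewrite !mxE; ring.
apply: le_trans (ler_enormD _ _ _) _; rewrite !enormZ !ger0_norm ?subr_ge0 //.
nra.
Qed.

Lemma Dom_convex (Rr t : R) v w : 0 <= t <= 1 -> Dom Rr v -> Dom Rr w ->
  Dom Rr (w + t *: (v - w)).
Proof. by move=> t01 [vX vY] [wX wY]; split; apply: enorm_convex. Qed.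

Lemma Dom_splice (Rr : R) v w : enorm idxX v <= Rr -> enorm idxY w <= Rr ->
  Dom Rr (splice idxLX v w).
Proof.
move=> vX wY; split; first by rewrite enorm_splice_in //; apply: idxX_LX.
by rewrite enorm_splice_out //; apply: idxY_notLX.
Qed.

Lemma Pset_splice_segment (Rr t : R) z1 z2 : 0 <= t <= 1 ->
  Dom Rr z1 -> Dom Rr z2 -> enorm idxL (z1 - z2) <= RLam R ->
  Pset Rr (z2 + 2^-1 *: (z1 - z2)) (z2 + t *: (splice idxLX z1 z2 - z2)).
Proof.
move=> t01 Dz1 Dz2 z12L; rewrite splice_segment_left.
have [zX _] := Dom_convex t01 Dz1 Dz2.
split; first exact: Dom_splice zX Dz2.2.
rewrite (@eq_enorm _ _ _ _ _ _ ((t - 2^-1) *: (z1 - z2))); last first.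
  by move=> j /idxL_LX LXj; rewrite !mxE LXj; ring.
have : `|t - 2^-1| <= 2^-1.
  by move: t01 => /andP[t0 t1]; rewrite ler_norml; apply/andP; split; lra.
move: z12L; rewrite enormZ /RLam; have := enorm_ge0 idxL (z1 - z2); nra.
Qed.

Lemma Dom_splice_segment (Rr t : R) z1 z2 : 0 <= t <= 1 -> Dom Rr z1 -> Dom Rr z2 ->
  Dom Rr (splice idxLX z1 z2 + t *: (z1 - splice idxLX z1 z2)).
Proof.
move=> t01 Dz1 Dz2; rewrite splice_segment_right.
by have [_ zY] := Dom_convex t01 Dz1 Dz2; exact: Dom_splice Dz1.1 zY.
Qed.

End Splice.

Section TwoSteps.
Variables (R : realType) (c u s : nat).
Local Notation N := (c + u + s)%N.
Local Notation vec := 'rV[R]_N.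
Local Notation idxLX := (@idxLX c u s).
Local Notation idxY := (@idxY c u s).
Variables (Rr : R) (F : vec -> vec) (U : set vec) (z1 z2 : vec).
Hypotheses (c_gt0 : (0 < c)%N) (Rr_gt0 : 0 < Rr) (U_open : open U) (Dom_U : Dom Rr `<=` U)
  (F_C1 : C1_on U F) (F_per : lift_periodic Rr F) (Dz1 : Dom Rr z1) (Dz2 : Dom Rr z2)
  (chart : enorm (@idxL c u s) (z1 - z2) <= RLam R).

Lemma center_unstable_step :
  inf [set Defs.mset idxLX idxLX (imat idxLX idxLX F (Pset Rr z)) | z in Dom Rr]
    * enorm idxLX (z1 - z2) <= enorm idxLX (F (splice idxLX z1 z2) - F z2).
Proof.
have [M _ pd_M] := pd_bounded Rr_gt0 Dom_U F_C1 F_per.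
pose c0 := z2 + 2^-1 *: (z1 - z2).
have Pc0_Dom : Pset Rr c0 `<=` Dom Rr by move=> w [].
have j0_LX : idxLX (Ordinal (ltn_addr s (ltn_addr u c_gt0))) by rewrite /idxLX /= ltn_addr.
have inf_le : inf [set Defs.mset idxLX idxLX (imat idxLX idxLX F (Pset Rr z)) | z in Dom Rr]
    <= Defs.mset idxLX idxLX (imat idxLX idxLX F (Pset Rr c0)).
  apply: ge_inf; first by exists 0 => _ [z _ <-]; exact: (mset_ge0 _ j0_LX).
  by exists c0 => //; apply: Dom_convex Dz1 Dz2; apply/andP; split; lra.
apply: le_trans (ler_wpM2r (enorm_ge0 _ _) inf_le) _.
have := mset_le_mean_value idxLX U_open F_C1 (subset_trans Pc0_Dom Dom_U)
  (fun i j w Pw => pd_M i j w (Pc0_Dom w Pw)) (@splice_subr_out _ _ _ _ _ z1 z2)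
  (fun t t01 => Pset_splice_segment t01 Dz1 Dz2 chart) j0_LX.
by rewrite [z2 + _]addrC subrK enorm_splice_subr.
Qed.

Lemma stable_step : enorm idxLX (F z1 - F (splice idxLX z1 z2)) <=
  sup [set opn idxLX idxY (jac F z) | z in Dom Rr] * enorm idxY (z1 - z2).
Proof.
have [M _ pd_M] := pd_bounded Rr_gt0 Dom_U F_C1 F_per.
have d_Y j : ~~ idxY j -> (z1 - splice idxLX z1 z2) ord0 j = 0.
  by move=> nYj; apply: subr_splice_in; apply: contraR nYj; apply: notLX_idxY.
have := enorm_le_opn_mean_value idxLX U_open F_C1 Dom_U pd_M d_Y
  (fun t t01 => Dom_splice_segment t01 Dz1 Dz2).
by rewrite [splice _ _ _ + _]addrC subrK enorm_subr_splice //; exact: idxY_notLX.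
Qed.

Lemma sup_opn_ge0 : 0 <= sup [set opn idxLX idxY (jac F z) | z in Dom Rr].
Proof.
have [M _ pd_M] := pd_bounded Rr_gt0 Dom_U F_C1 F_per.
exact: le_trans (opn_ge0 _ _ _) (opn_le_sup _ _ pd_M Dz1).
Qed.

End TwoSteps.

Unset Implicit Arguments.
Set Strict Implicit.

Theorem lemma4p7 (R : realType) (c u s : nat)
  (hc : (0 < c)%N) (hu : (0 < u)%N) (hs : (0 < s)%N)
  (Rr : R) (hR0 : 0 < Rr) (hR1 : Rr < RLam R / 2)
  (L : R) (hL0 : 2 * Rr / RLam R < L) (hL1 : L < 1)
  (F : 'rV[R]_(c + u + s) -> 'rV[R]_(c + u + s))
  (U : set 'rV[R]_(c + u + s)) (hUo : open U) (hDU : @Dom R c u s Rr `<=` U)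
  (hC1 : C1_on U F) (hper : lift_periodic Rr F)
  (hrate : rate_conditions0 Rr L F)
  (z1 z2 : 'rV[R]_(c + u + s))
  (hz1 : @Dom R c u s Rr z1) (hz2 : @Dom R c u s Rr z2)
  (hchart : enorm (@idxL c u s) (z1 - z2) <= RLam R)
  (hJ : Jcu z2 L z1) :
  enorm (@idxLX c u s) (F z1 - F z2) >= xi_cu1P Rr L F * enorm (@idxLX c u s) (z1 - z2).
Proof.
case: hJ => [/= cone|->]; last by rewrite !subrr !enorm0 mulr0.
have cu_step := center_unstable_step hc hR0 hUo hDU hC1 hper hz1 hz2 hchart.
have s_step := stable_step hR0 hUo hDU hC1 hper hz1 hz2.
have S_ge0 := sup_opn_ge0 hR0 hDU hC1 hper hz1.
have triangle :=
  ler_enorm_distD (@idxLX c u s) (F z2) (F (splice (@idxLX c u s) z1 z2)) (F z1).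
have := ler_wpM2l S_ge0 (ltW cone).
rewrite /xi_cu1P; nra.
Qed.
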